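(* Suppose $U\in\mathbf{M}_{2N}(\mathbb{C})$ is a partial isometry with $U^{*}=U^{\sharp}$. Then there is a symplectic unitary $W\in\mathbf{M}_{2N}(\mathbb{C})$ such that $W\xi=U\xi$ for all $\xi\perp\ker(U)$.
   Context: A partial isometry is $U$ with $UU^*U=U$. For $X\in\mathbf{M}_{2N}(\mathbb{C})$ in $N\times N$ blocks $X=\begin{bmatrix}A&B\\C&D\end{bmatrix}$, $X^{\sharp}=\begin{bmatrix}D^{\mathrm T}&-B^{\mathrm T}\\-C^{\mathrm T}&A^{\mathrm T}\end{bmatrix}$, equivalently $X^\sharp=-ZX^{\mathrm T}Z$ with $Z=\begin{bmatrix}0&I\\-I&0\end{bmatrix}$. A symplectic unitary is a unitary $W\in\mathbf{M}_{2N}(\mathbb{C})$ with $W^{\mathrm T}ZW=Z$. *)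

From Stdlib Require Import Reals.
From mathcomp Require Import all_boot all_algebra.
From mathcomp Require Import complex Rstruct.
Set Implicit Arguments. Unset Strict Implicit. Unset Printing Implicit Defensive.
Import GRing.Theory Num.Theory.
Local Open Scope ring_scope.

Notation Cplx := (Rdefinitions.R[i]).

Definition adjmx {m n : nat} (A : 'M[Cplx]_(m, n)) : 'M[Cplx]_(n, m) :=
  (map_mx Num.conj A)^T.

Definition partial_isometry {n : nat} (U : 'M[Cplx]_n) : Prop :=
  U *m adjmx U *m U = U.

Definition sharp {N : nat} (X : 'M[Cplx]_(N + N)) : 'M[Cplx]_(N + N) :=
  block_mx (drsubmx X)^T (- (ursubmx X)^T) (- (dlsubmx X)^T) (ulsubmx X)^T.

Definition Zmx (N : nat) : 'M[Cplx]_(N + N) :=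
  block_mx 0 1%:M (- 1%:M) 0.

Definition unitary {n : nat} (W : 'M[Cplx]_n) : Prop :=
  adjmx W *m W = 1%:M /\ W *m adjmx W = 1%:M.

Definition symplectic_unitary {N : nat} (W : 'M[Cplx]_(N + N)) : Prop :=
  unitary W /\ W^T *m Zmx N *m W = Zmx N.

Definition perp_ker {m n : nat} (U : 'M[Cplx]_(m, n)) (xi : 'cV[Cplx]_n) : Prop :=
  forall eta : 'cV[Cplx]_n, U *m eta = 0 -> adjmx eta *m xi = 0.

(* Write J := Z o conj, an antiunitary with J^2 = -1 and <v, J v> = 0.  The
   hypothesis U^* = U^sharp says exactly that U commutes with J.  If U is not
   yet an isometry, pick unit vectors e in ker U and f in ker U^*; then e, J e
   and f, J f are orthonormal pairs lying in the same kernels, so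
   U + f e^* + (J f)(J e)^* is again a J-commuting partial isometry, agreeing
   with U on (ker U)^perp and with strictly smaller kernel.  Iterating yields a
   unitary W commuting with J, and commuting with J is what W^T Z W = Z means
   for a unitary W. *)

From Stdlib Require Import Reals.
From mathcomp Require Import all_boot all_algebra.
From mathcomp Require Import complex Rstruct.
Import GRing.Theory Num.Theory.
Local Open Scope ring_scope.

Local Notation conjmx := (map_mx Num.conj).

Section Adjoint.
Variables m n p : nat.
Implicit Types A B : 'M[Cplx]_(m, n).

Lemma adjmxM A (C : 'M[Cplx]_(n, p)) : adjmx (A *m C) = adjmx C *m adjmx A.
Proof. by rewrite /adjmx map_mxM trmx_mul. Qed.

Lemma adjmxK A : adjmx (adjmx A) = A.
Proof. by apply/matrixP=> i j; rewrite !mxE conjCK. Qed.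

Lemma adjmxD A B : adjmx (A + B) = adjmx A + adjmx B.
Proof. by apply/matrixP=> i j; rewrite !mxE rmorphD. Qed.

Lemma adjmxN A : adjmx (- A) = - adjmx A.
Proof. by apply/matrixP=> i j; rewrite !mxE rmorphN. Qed.

Lemma adjmx0 : adjmx (0 : 'M[Cplx]_(m, n)) = 0.
Proof. by apply/matrixP=> i j; rewrite !mxE rmorph0. Qed.

Lemma adjmxZ a A : adjmx (a *: A) = a^* *: adjmx A.
Proof. by apply/matrixP=> i j; rewrite !mxE rmorphM. Qed.

Lemma adjmx_conj A : adjmx (conjmx A) = A^T.
Proof. by apply/matrixP=> i j; rewrite !mxE conjCK. Qed.

Lemma adjmx_tr A : adjmx A^T = conjmx A.
Proof. by rewrite /adjmx map_trmx trmxK. Qed.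

Lemma conjmx_adj A : conjmx (adjmx A) = A^T.
Proof. by apply/matrixP=> i j; rewrite !mxE conjCK. Qed.

Lemma conjmxK A : conjmx (conjmx A) = A.
Proof. by apply/matrixP=> i j; rewrite !mxE conjCK. Qed.

Lemma adjmx_row_mx A (C : 'M[Cplx]_(m, p)) :
  adjmx (row_mx A C) = col_mx (adjmx A) (adjmx C).
Proof. by rewrite /adjmx map_row_mx tr_row_mx. Qed.

End Adjoint.

Lemma adjmx_mul_self n (v : 'cV[Cplx]_n) :
  adjmx v *m v = (\sum_k `|v k 0| ^+ 2)%:M.
Proof.
rewrite [LHS]mx11_scalar; congr scalar_mx; rewrite !mxE.
by apply: eq_bigr => k _; rewrite !mxE normCK mulrC.
Qed.

Lemma adjmx_mul_self_eq0 n (v : 'cV[Cplx]_n) : (adjmx v *m v == 0) = (v == 0).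
Proof.
apply/eqP/eqP=> [|->]; last by rewrite mulmx0.
rewrite adjmx_mul_self => /matrixP /(_ 0 0); rewrite !mxE /= mulr1n => sum0.
apply/matrixP=> i j; rewrite (ord1 j) mxE.
have := psumr_eq0P (fun k _ => exprn_ge0 2 (normr_ge0 (v k 0))) sum0 (i := i) isT.
by move/eqP; rewrite sqrf_eq0 normr_eq0 => /eqP.
Qed.

Lemma exists_unit_normalization n (c : 'cV[Cplx]_n) : c != 0 ->
  exists a : Cplx, adjmx (a *: c) *m (a *: c) = 1%:M.
Proof.
rewrite -adjmx_mul_self_eq0 adjmx_mul_self; set s := \sum_k _ => sM_neq0.
have s_neq0 : s != 0 by apply: contraNneq sM_neq0 => ->; rewrite -scalemx1 scale0r.
have s_ge0 : 0 <= s by apply: sumr_ge0 => k _; exact: exprn_ge0.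
have r_neq0 : sqrtC s != 0 by rewrite sqrtC_eq0.
exists (sqrtC s)^-1.
rewrite adjmxZ -scalemxAl -scalemxAr scalerA adjmx_mul_self -/s scale_scalar_mx.
rewrite geC0_conj ?invr_ge0 ?sqrtC_ge0 //.
by rewrite -{3}[s]sqrtCK -expr2 -exprMn mulVf // expr1n.
Qed.

Lemma rank_lt_of_killed {F : fieldType} {m n} (A B : 'M[F]_(m, n))
    (x : 'rV[F]_n) (y : 'cV[F]_n) :
  (A <= B)%MS -> (x <= B)%MS -> A *m y = 0 -> x *m y != 0 ->
  (\rank A < \rank B)%N.
Proof.
move=> sAB sxB Ay xy_neq0; apply: rank_ltmx; rewrite ltmxE sAB /=.
apply: contra xy_neq0 => sBA.
by have /submxP[z ->] := submx_trans sxB sBA; rewrite -mulmxA Ay mulmx0.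
Qed.

Section PartialIsometry.
Context {n : nat} {U : 'M[Cplx]_n}.
Hypothesis pU : partial_isometry U.

Lemma partial_isometry_proj : (adjmx U *m U) *m (adjmx U *m U) = adjmx U *m U.
Proof. by rewrite mulmxA -(mulmxA _ U) -mulmxA pU. Qed.

Lemma partial_isometry_adj : partial_isometry (adjmx U).
Proof.
move: pU; rewrite /partial_isometry adjmxK => /(congr1 adjmx).
by rewrite !adjmxM adjmxK mulmxA.
Qed.

Lemma perp_ker_proj (xi : 'cV[Cplx]_n) : perp_ker U xi -> adjmx U *m U *m xi = xi.
Proof.
move=> xi_perp; set P := adjmx U *m U.
have adjP : adjmx P = P by rewrite adjmxM adjmxK.
set eta := xi - P *m xi.
have Peta : P *m eta = 0 by rewrite mulmxBr mulmxA partial_isometry_proj ?subrr.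
have UP : U *m P = U by rewrite mulmxA pU.
have Ueta : U *m eta = 0 by rewrite -UP -mulmxA Peta mulmx0.
have : adjmx eta *m eta = 0.
  rewrite {2}/eta mulmxBr xi_perp // mulmxA -adjP -adjmxM Peta.
  by rewrite adjmx0 mul0mx subr0.
by move/eqP; rewrite adjmx_mul_self_eq0 subr_eq0 => /eqP <-.
Qed.

Lemma partial_isometry_ker_unit : adjmx U *m U != 1%:M ->
  exists2 e : 'cV[Cplx]_n, U *m e = 0 & adjmx e *m e = 1%:M.
Proof.
move=> P_neq1; have : 1%:M - adjmx U *m U != 0 by rewrite subr_eq0 eq_sym.
case/matrix0Pn => i [j ij_neq0].
have /exists_unit_normalization[a e1] : col j (1%:M - adjmx U *m U) != 0.
  apply: contraNneq ij_neq0 => /matrixP/(_ i 0).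
  by rewrite [col _ _ _ _]mxE mxE => ->; rewrite mxE.
exists (a *: col j (1%:M - adjmx U *m U)) => //.
by rewrite -scalemxAr colE mulmxA mulmxBr mulmx1 mulmxA pU subrr mul0mx scaler0.
Qed.

Context {k : nat} {E F : 'M[Cplx]_(n, k)}.
Hypotheses (UE : U *m E = 0) (UF : adjmx U *m F = 0).
Hypotheses (EE : adjmx E *m E = 1%:M) (FF : adjmx F *m F = 1%:M).

Lemma add_isometry_proj :
  adjmx (U + F *m adjmx E) *m (U + F *m adjmx E) = adjmx U *m U + E *m adjmx E.
Proof.
have FU : adjmx F *m U = 0 by rewrite -[U]adjmxK -adjmxM UF adjmx0.
rewrite adjmxD adjmxM adjmxK mulmxDl !mulmxDr mulmxA UF mul0mx addr0.
by rewrite -!(mulmxA E) FU mulmx0 add0r (mulmxA (adjmx F)) FF mul1mx.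
Qed.

Lemma add_isometry_partial_isometry : partial_isometry (U + F *m adjmx E).
Proof.
have EP : adjmx E *m (adjmx U *m U) = 0 by rewrite mulmxA -adjmxM UE adjmx0 mul0mx.
rewrite /partial_isometry -mulmxA add_isometry_proj mulmxDl !mulmxDr.
rewrite mulmxA pU mulmxA UE mul0mx addr0 -mulmxA EP mulmx0 add0r.
by rewrite -mulmxA (mulmxA (adjmx E)) EE mul1mx.
Qed.

End PartialIsometry.

Section Symplectic.
Context {N : nat}.
Local Notation Z := (Zmx N).

Lemma Zmx_mul_self : Z *m Z = - 1%:M.
Proof.
rewrite /Zmx mulmx_block !mul0mx !mulmx0 !add0r !addr0 !mulmx1 mul1mx.
by rewrite (scalar_mx_block N N) opp_block_mx !oppr0.
Qed.

Lemma trmx_Zmx : Z^T = - Z.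
Proof. by rewrite /Zmx tr_block_mx !trmx0 linearN /= trmx1 opp_block_mx !oppr0 opprK. Qed.

Lemma conjmx_Zmx : conjmx Z = Z.
Proof. by rewrite /Zmx map_block_mx !map_mx0 map_mxN map_mx1. Qed.

Lemma adjmx_Zmx : adjmx Z = - Z.
Proof. by rewrite /adjmx conjmx_Zmx trmx_Zmx. Qed.

Lemma sharpE (X : 'M[Cplx]_(N + N)) : sharp X = - (Z *m X^T *m Z).
Proof.
rewrite /sharp /Zmx -{5}[X]submxK tr_block_mx !mulmx_block.
rewrite !mul0mx !mulmx0 !add0r !addr0 !mulmxN !mulNmx !mulmx1 !mul1mx.
by rewrite opp_block_mx !opprK.
Qed.

Definition Jmx {k} (A : 'M[Cplx]_(N + N, k)) := Z *m conjmx A.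

Definition Jcommute (A : 'M[Cplx]_(N + N)) := Jmx A = A *m Z.

Lemma sharp_Jcommute {U : 'M[Cplx]_(N + N)} : adjmx U = sharp U -> Jcommute U.
Proof.
rewrite sharpE => adjU.
have defU : U = - (Z *m (conjmx U *m Z)).
  by rewrite -[LHS]adjmxK adjU adjmxN !adjmxM adjmx_tr adjmx_Zmx mulNmx !mulmxN opprK.
by rewrite /Jcommute /Jmx {2}defU mulNmx -!mulmxA Zmx_mul_self !mulmxN mulmx1 opprK.
Qed.

Lemma Jcommute_adj_mulZ {A : 'M[Cplx]_(N + N)} :
  Jcommute A -> adjmx A *m Z = Z *m A^T.
Proof.
move/(congr1 trmx); rewrite !trmx_mul trmx_Zmx mulmxN mulNmx.
by move/oppr_inj.
Qed.

Lemma Jcommute_adj {A : 'M[Cplx]_(N + N)} : Jcommute A -> Jcommute (adjmx A).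
Proof. by move=> jA; rewrite /Jcommute /Jmx conjmx_adj -Jcommute_adj_mulZ. Qed.

Lemma Jcommute_add {A B : 'M[Cplx]_(N + N)} :
  Jcommute A -> Jcommute B -> Jcommute (A + B).
Proof. by move=> jA jB; rewrite /Jcommute /Jmx map_mxD mulmxDr mulmxDl -jA -jB. Qed.

Lemma Jcommute_ker {A : 'M[Cplx]_(N + N)} {v : 'cV[Cplx]_(N + N)} :
  Jcommute A -> A *m v = 0 -> A *m Jmx v = 0.
Proof. by move=> jA Av; rewrite /Jmx mulmxA -jA -mulmxA -map_mxM Av map_mx0 mulmx0. Qed.

Lemma Jcommute_unitary_symplectic {W : 'M[Cplx]_(N + N)} :
  unitary W -> Jcommute W -> symplectic_unitary W.
Proof.
move=> uW jW; split => //; have [WW1 _] := uW.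
have -> : W^T = - (Z *m (adjmx W *m Z)).
  by rewrite Jcommute_adj_mulZ // mulmxA Zmx_mul_self mulNmx mul1mx opprK.
rewrite !mulNmx -!mulmxA (mulmxA Z Z W) Zmx_mul_self mulNmx mul1mx.
by rewrite !mulmxN opprK WW1 mulmx1.
Qed.

Lemma adjmx_Jmx (v : 'cV[Cplx]_(N + N)) : adjmx (Jmx v) = - (v^T *m Z).
Proof. by rewrite /Jmx adjmxM adjmx_conj adjmx_Zmx mulmxN. Qed.

Lemma adjmx_Jmx_mul_Jmx (v w : 'cV[Cplx]_(N + N)) :
  adjmx (Jmx v) *m Jmx w = conjmx (adjmx v *m w).
Proof.
rewrite adjmx_Jmx /Jmx mulNmx -mulmxA (mulmxA Z) Zmx_mul_self mulNmx mul1mx.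
by rewrite mulmxN opprK map_mxM conjmx_adj.
Qed.

(* (conj v)^T Z (conj v) is 1x1 and Z is skew-symmetric, so it vanishes. *)
Lemma adjmx_mul_Jmx (v : 'cV[Cplx]_(N + N)) : adjmx v *m Jmx v = 0.
Proof.
rewrite /Jmx mulmxA; set A := _ *m Z *m _.
have A_skew : A = - A.
  have trA : A^T = A by rewrite [A]mx11_scalar tr_scalar_mx.
  by rewrite -{1}trA /A !trmx_mul trmxK trmx_Zmx mulNmx mulmxN mulmxA.
apply/matrixP=> i j; move/matrixP: A_skew => /(_ i j); rewrite !mxE => /eqP.
by rewrite -subr_eq0 opprK -mulr2n mulrn_eq0 /= => /eqP.
Qed.

Lemma adjmx_Jmx_mul (v : 'cV[Cplx]_(N + N)) : adjmx (Jmx v) *m v = 0.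
Proof. by rewrite -[LHS]adjmxK adjmxM adjmxK adjmx_mul_Jmx adjmx0. Qed.

Definition Jframe (v : 'cV[Cplx]_(N + N)) := row_mx v (Jmx v).

Lemma Jframe_isometry {v : 'cV[Cplx]_(N + N)} :
  adjmx v *m v = 1%:M -> adjmx (Jframe v) *m Jframe v = 1%:M.
Proof.
move=> vv1; rewrite adjmx_row_mx mul_col_row vv1 adjmx_mul_Jmx adjmx_Jmx_mul.
by rewrite adjmx_Jmx_mul_Jmx vv1 map_mx1 [RHS](scalar_mx_block 1 1).
Qed.

Lemma Jcommute_Jframe (v w : 'cV[Cplx]_(N + N)) :
  Jcommute (Jframe v *m adjmx (Jframe w)).
Proof.
rewrite /Jframe adjmx_row_mx mul_row_col /Jcommute {1}/Jmx map_mxD !map_mxM.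
rewrite !conjmx_adj conjmx_Zmx conjmxK adjmx_Jmx /Jmx trmx_mul trmx_Zmx.
rewrite mulmxDr mulmxDl addrC; congr (_ + _).
  by rewrite !mulmxN !mulmxA Zmx_mul_self !mulNmx mul1mx opprK.
by rewrite mulmxN mulNmx -!mulmxA Zmx_mul_self !mulmxN mulmx1 opprK.
Qed.

Lemma Jcommute_extension_step {U : 'M[Cplx]_(N + N)} :
  partial_isometry U -> Jcommute U -> adjmx U *m U != 1%:M ->
  exists U' : 'M[Cplx]_(N + N), [/\ partial_isometry U', Jcommute U',
    U' *m (adjmx U *m U) = U,
    adjmx U' *m U' *m (adjmx U *m U) = adjmx U *m U &
    (\rank (1%:M - adjmx U' *m U')%R < \rank (1%:M - adjmx U *m U)%R)%N].
Proof.
move=> pU jU P_neq1; set P := adjmx U *m U.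
have [e Ue ee] := partial_isometry_ker_unit pU P_neq1.
have Q_neq1 : adjmx (adjmx U) *m adjmx U != 1%:M.
  by rewrite adjmxK; apply: contra P_neq1 => /eqP/mulmx1C ->.
have [f Uf ff] := partial_isometry_ker_unit (partial_isometry_adj pU) Q_neq1.
have UE : U *m Jframe e = 0.
  by rewrite /Jframe mul_mx_row Ue (Jcommute_ker jU Ue) row_mx0.
have UF : adjmx U *m Jframe f = 0.
  by rewrite /Jframe mul_mx_row Uf (Jcommute_ker (Jcommute_adj jU) Uf) row_mx0.
have EE := Jframe_isometry ee; have FF := Jframe_isometry ff.
have EP : adjmx (Jframe e) *m P = 0 by rewrite mulmxA -adjmxM UE adjmx0 mul0mx.
have PP : P *m P = P := partial_isometry_proj pU.
have P'P : (P + Jframe e *m adjmx (Jframe e)) *m P = P.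
  by rewrite mulmxDl PP -mulmxA EP mulmx0 addr0.
exists (U + Jframe f *m adjmx (Jframe e)); rewrite (add_isometry_proj UF FF).
split => //; first exact: add_isometry_partial_isometry.
- by apply: Jcommute_add; last exact: Jcommute_Jframe.
- by rewrite mulmxDl mulmxA pU -mulmxA EP mulmx0 addr0.
apply: (rank_lt_of_killed _ _ (adjmx e) e).
- by apply/submxP; exists (1%:M - (P + Jframe e *m adjmx (Jframe e)));
    rewrite mulmxBr mulmx1 mulmxBl mul1mx P'P subrr subr0.
- by apply/submxP; exists (adjmx e);
    rewrite mulmxBr mulmx1 mulmxA -adjmxM Ue adjmx0 mul0mx subr0.
- rewrite mulmxBl mul1mx mulmxDl -mulmxA Ue mulmx0 add0r -mulmxA.
  by rewrite adjmx_row_mx mul_col_mx ee adjmx_Jmx_mul mul_row_col mulmx1 mulmx0 addr0 subrr.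
- by rewrite ee; apply/eqP => /matrixP/(_ 0 0); rewrite !mxE /=; apply/eqP/oner_neq0.
Qed.

Lemma Jcommute_unitary_extension {U : 'M[Cplx]_(N + N)} :
  partial_isometry U -> Jcommute U ->
  exists W : 'M[Cplx]_(N + N),
    [/\ unitary W, Jcommute W & W *m (adjmx U *m U) = U].
Proof.
have [r] := ubnPleq (\rank (1%:M - adjmx U *m U)%R).
elim: r U => [|r IHr] U rU pU jU; have [P1|P_neq1] := eqVneq (adjmx U *m U) 1%:M;
  try by exists U; rewrite P1 mulmx1; split => //; split; last exact: mulmx1C.
- by move: rU; rewrite leqn0 mxrank_eq0 subr_eq0 eq_sym (negbTE P_neq1).
have [U' [pU' jU' U'P P'P ltr]] := Jcommute_extension_step pU jU P_neq1.
have [W [uW jW WP']] := IHr U' (leq_trans ltr rU) pU' jU'.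
by exists W; split => //; rewrite -P'P mulmxA WP'.
Qed.

End Symplectic.

Theorem mainTheorem18 (N : nat) (U : 'M[Cplx]_(N + N)) :
  partial_isometry U -> adjmx U = sharp U ->
  exists W : 'M[Cplx]_(N + N),
    symplectic_unitary W /\
    (forall xi : 'cV[Cplx]_(N + N), perp_ker U xi -> W *m xi = U *m xi).
Proof.
move=> pU /sharp_Jcommute jU.
have [W [uW jW WP]] := Jcommute_unitary_extension pU jU.
exists W; split; first exact: Jcommute_unitary_symplectic.
by move=> xi /(perp_ker_proj pU) {1}<-; rewrite mulmxA WP.
Qed.
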